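(* Let $J$ be a real symmetric $N\times N$ matrix with zero diagonal, and let $\lambda_1(J)$ denote its smallest eigenvalue. Let $\Delta$ be a real number with $\Delta \ge \Delta_{\min} := \max(0,-\lambda_1(J))$, and set $\tilde{J} := J + \Delta\, \mathbb{1}_{N\times N}$. If $x\in\mathbb{R}^N$ satisfies $x = \operatorname{sgn}(Jx)$ (the zero-temperature TAP / naive mean-field equation), then $x$ also satisfies $x = \operatorname{sgn}(\tilde{J}x)$ (the zero-temperature critical point equation of the Hamiltonian density).
   Context: $\operatorname{sgn}$ is applied componentwise to vectors, with $\operatorname{sgn}(t)=1$ for $t>0$, $\operatorname{sgn}(t)=-1$ for $t<0$ and $\operatorname{sgn}(0)=0$. $J$ is the coupling matrix of an Ising spin system with Hamiltonian $H=-\sum_i h_i s_i-\sum_{i<j}J_{ij}s_is_j$, and $\tilde J$ is the ''shifted coupling matrix''. *)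

From HB Require Import structures.
From mathcomp Require Import all_boot all_order all_algebra.
From mathcomp Require Import reals.
Set Implicit Arguments. Unset Strict Implicit. Unset Printing Implicit Defensive.
Import Order.TTheory GRing.Theory Num.Theory.
Local Open Scope ring_scope.

Definition sgnv (R : realType) (N : nat) (v : 'cV[R]_N) : 'cV[R]_N :=
  map_mx (fun t : R => Num.sg t) v.

Definition smallest_eigenvalue (R : realType) (N : nat) (J : 'M[R]_N) (lam : R) : Prop :=
  eigenvalue J lam /\ forall a : R, eigenvalue J a -> lam <= a.

From HB Require Import structures.
From mathcomp Require Import all_boot all_order all_algebra.
From mathcomp Require Import reals.
Import Order.TTheory GRing.Theory Num.Theory.
Local Open Scope ring_scope.

(* Proof idea: the shift adds [Delta x = Delta sgn(J x)] to [J x], i.e. a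
   nonnegative multiple of the sign of each coordinate, which cannot change
   that sign. *)

Lemma sgr_addr_scale_sg (R : realDomainType) (d y : R) :
  0 <= d -> Num.sg (y + d * Num.sg y) = Num.sg y.
Proof.
move=> d_ge0; have [y_lt0|y_gt0|->] := ltrgtP y 0.
- by rewrite (ltr0_sg y_lt0) mulrN1 ltr0_sg // subr_lt0 (lt_le_trans y_lt0).
- by rewrite (gtr0_sg y_gt0) mulr1 gtr0_sg // ltr_wpDr.
- by rewrite sgr0 mulr0 addr0 sgr0.
Qed.

Lemma sgnv_fixpoint_shift (R : realType) (N : nat) (J : 'M[R]_N) (d : R)
    (x : 'cV[R]_N) :
  0 <= d -> x = sgnv (J *m x) -> x = sgnv ((J + d%:M) *m x).
Proof.
move=> d_ge0 x_fix; apply/matrixP => i j.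
have x_ij : x i j = Num.sg ((J *m x) i j) by rewrite {1}x_fix mxE.
rewrite /sgnv mxE mulmxDl mul_scalar_mx mxE [(d *: x) i j]mxE x_ij.
by rewrite sgr_addr_scale_sg.
Qed.

Theorem proposition1 (R : realType) (N : nat) (J : 'M[R]_N) (lam1 Delta : R)
  (x : 'cV[R]_N) :
  J^T = J ->
  (forall i : 'I_N, J i i = 0) ->
  smallest_eigenvalue J lam1 ->
  Num.max 0 (- lam1) <= Delta ->
  x = sgnv (J *m x) ->
  x = sgnv ((J + Delta%:M) *m x).
Proof.
move=> _ _ _ Delta_ge_max; apply: sgnv_fixpoint_shift.
by apply: le_trans Delta_ge_max; rewrite le_max lexx.
Qed.
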